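(* Let $\bowtie$ be a $4\times n$ Latin rectangle with two colors $R,B$. Define the six column types (listed top to bottom) $b_1=(R,R,B,B)^T$, $b_2=(B,B,R,R)^T$, $b_3=(R,B,B,R)^T$, $b_4=(B,R,R,B)^T$, $b_5=(R,B,R,B)^T$, $b_6=(B,R,B,R)^T$, and let $\mu_i$ be the number of columns of $\bowtie$ of type $b_i$. Then $\mu_1=\mu_2$, $\mu_3=\mu_4$, and $\mu_5=\mu_6$.
   Context: A Latin rectangle is an $a\times b$ array of colored nodes such that each color appears the same number of times in every row and each color appears the same number of times in every column. The pairs $(b_1,b_2)$, $(b_3,b_4)$, $(b_5,b_6)$ are color-complementary pairs of columns (each is obtained from the other by swapping $R$ and $B$). *)

From HB Require Import structures.
From mathcomp Require Import all_boot all_algebra.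
Set Implicit Arguments. Unset Strict Implicit. Unset Printing Implicit Defensive.

Definition latin_rectangle (C : finType) (a b : nat) (M : 'M[C]_(a, b)) : Prop :=
  (forall (i : 'I_a) (c d : C),
      #|[set j : 'I_b | M i j == c]| = #|[set j : 'I_b | M i j == d]|) /\
  (forall (j : 'I_b) (c d : C),
      #|[set i : 'I_a | M i j == c]| = #|[set i : 'I_a | M i j == d]|).

Inductive color := R | B.
Definition color_to_bool (c : color) : bool := if c is R then true else false.
Definition bool_to_color (b : bool) : color := if b then R else B.
Lemma color_boolK : cancel color_to_bool bool_to_color. Proof. by case. Qed.
HB.instance Definition _ := Finite.copy color (can_type color_boolK).

Definition col4 (c0 c1 c2 c3 : color) : 'cV[color]_4 :=
  \col_(i < 4) nth B [:: c0; c1; c2; c3] i.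

Definition b1 := col4 R R B B.
Definition b2 := col4 B B R R.
Definition b3 := col4 R B B R.
Definition b4 := col4 B R R B.
Definition b5 := col4 R B R B.
Definition b6 := col4 B R B R.

Definition mu (n : nat) (M : 'M[color]_(4, n)) (v : 'cV[color]_4) : nat :=
  #|[set j : 'I_n | col j M == v]|.

From mathcomp Require Import all_boot all_algebra.
Set Implicit Arguments. Unset Strict Implicit. Unset Printing Implicit Defensive.
Import GRing.Theory Num.Theory.

(* Count R as +1 and B as -1. A Latin rectangle with two colors has every row
   and every column of signed sum 0. In a column of height 4 with two R's and
   two B's, the entries in rows 0 and 1 sum to +2 exactly for type b1, to -2
   exactly for type b2, and to 0 otherwise; summing over all columns and using
   that rows 0 and 1 have signed sum 0 gives 2 (mu1 - mu2) = 0. The row pairs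
   (0, 3) and (0, 2) give mu3 = mu4 and mu5 = mu6 in the same way. *)

Local Open Scope ring_scope.

Definition sgnc (c : color) : int := if c is R then 1 else -1.

Lemma card_set_natr (I : finType) (P : pred I) :
  #|[set i | P i]|%:R = \sum_i (P i)%:R :> int.
Proof.
by rewrite -sum1dep_card natr_sum big_mkcond; apply: eq_bigr => i _; case: (P i).
Qed.

Lemma sum_sgnc (I : finType) (f : I -> color) :
  \sum_i sgnc (f i) = #|[set i | f i == R]|%:R - #|[set i | f i == B]|%:R.
Proof.
by rewrite !card_set_natr -sumrB; apply: eq_bigr => i _; case: (f i).
Qed.

Lemma sum_sgnc_eq0 (I : finType) (f : I -> color) :
  #|[set i | f i == R]| = #|[set i | f i == B]| -> \sum_i sgnc (f i) = 0.
Proof. by rewrite sum_sgnc => ->; rewrite subrr. Qed.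

Lemma latin_rectangle_sgnc (a b : nat) (M : 'M[color]_(a, b)) :
  latin_rectangle M ->
  (forall i, \sum_j sgnc (M i j) = 0) /\ (forall j, \sum_i sgnc (M i j) = 0).
Proof. by case=> rows cols; split=> k; apply: sum_sgnc_eq0. Qed.

Lemma latin_card_col_eq (a n : nat) (M : 'M[color]_(a, n)) (i k : 'I_a) u v :
  latin_rectangle M ->
  (forall c : 'cV[color]_a, \sum_r sgnc (c r 0) = 0 ->
     sgnc (c i 0) + sgnc (c k 0) = 2%:R * ((c == u)%:R - (c == v)%:R)) ->
  #|[set j | col j M == u]| = #|[set j | col j M == v]|.
Proof.
move=> /latin_rectangle_sgnc[rows cols] pair_sgnc.
have pair_col j :
    sgnc (M i j) + sgnc (M k j) = 2%:R * ((col j M == u)%:R - (col j M == v)%:R).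
  have := pair_sgnc (col j M); rewrite !mxE; apply.
  by under eq_bigr do rewrite mxE; exact: cols.
have : 2%:R * (#|[set j | col j M == u]|%:R - #|[set j | col j M == v]|%:R) = 0 :> int.
  rewrite !card_set_natr -sumrB mulr_sumr -(eq_bigr _ (fun j _ => pair_col j)).
  by rewrite big_split /= !rows addr0.
by move/eqP; rewrite mulf_eq0 subr_eq0 !natz => /orP[] // /eqP[].
Qed.

Lemma col4P (c : 'cV[color]_4) : exists a b c' d, c = col4 a b c' d.
Proof.
exists (c 0 0), (c 1 0), (c 2 0), (c 3 0).
apply/matrixP => i j; rewrite ord1 mxE.
by case: i => -[|[|[|[|//]]]] lt_i4; congr (c _ _); exact: val_inj.
Qed.

Lemma eq_col4 a b c d a' b' c' d' :
  (col4 a b c d == col4 a' b' c' d') = [&& a == a', b == b', c == c' & d == d'].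
Proof.
apply/eqP/and4P => [/matrixP eq_ad | [/eqP-> /eqP-> /eqP-> /eqP->] //].
by have := eq_ad 0 0; have := eq_ad 1 0; have := eq_ad 2 0; have := eq_ad 3 0;
  rewrite !mxE /= => -> -> -> ->.
Qed.

Lemma balanced_col4_pairs (c : 'cV[color]_4) : \sum_r sgnc (c r 0) = 0 ->
  [/\ sgnc (c 0 0) + sgnc (c 1 0) = 2%:R * ((c == b1)%:R - (c == b2)%:R),
      sgnc (c 0 0) + sgnc (c 3 0) = 2%:R * ((c == b3)%:R - (c == b4)%:R) &
      sgnc (c 0 0) + sgnc (c 2 0) = 2%:R * ((c == b5)%:R - (c == b6)%:R)].
Proof.
have [a [b [c' [d ->]]]] := col4P c.
rewrite !big_ord_recl big_ord0 !mxE /= !eq_col4.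
by case: a; case: b; case: c'; case: d => /= /eqP.
Qed.

Theorem lemma9p6 (n : nat) (M : 'M[color]_(4, n)) :
  latin_rectangle M ->
  [/\ mu M b1 = mu M b2, mu M b3 = mu M b4 & mu M b5 = mu M b6].
Proof.
move=> latinM; rewrite /mu; split.
- by apply: (latin_card_col_eq (i := 0) (k := 1) latinM) => c /balanced_col4_pairs[].
- by apply: (latin_card_col_eq (i := 0) (k := 3) latinM) => c /balanced_col4_pairs[].
- by apply: (latin_card_col_eq (i := 0) (k := 2) latinM) => c /balanced_col4_pairs[].
Qed.
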